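(* Let $X$ be an $n\times p$ real matrix ($n \ge p$) whose columns have $\ell_2$-norm $1$, such that $X^T X$ is invertible, and let $Y\in\mathbb{R}^n$. Let $M=(X^TX)^{-1}$ and suppose that $M$ is strictly diagonally dominant: $$M_{jj} > \sum_{i\neq j} |M_{ij}| \quad \text{for all } j=1,\dots,p.$$ For $\lambda>0$, the Lasso solution is the minimizer of $$\min_{\beta\in\mathbb{R}^p} \tfrac12 \|Y-X\beta\|_2^2 + \lambda\|\beta\|_1,$$ and the Dantzig solution is the minimizer of $$\min_{\beta\in\mathbb{R}^p} \|\beta\|_1 \quad\text{subject to}\quad \|X^T(Y-X\beta)\|_\infty \le \lambda.$$ Then for every $\lambda>0$ the Lasso solution and the Dantzig solution are identical, i.e., the Lasso and Dantzig regularization paths $\lambda\mapsto\hat\beta_\lambda$ coincide.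
   Context: $\|\cdot\|_1$, $\|\cdot\|_2$, $\|\cdot\|_\infty$ denote the usual $\ell_1$, $\ell_2$, $\ell_\infty$ norms on Euclidean space. The normalization of the columns of $X$ to unit $\ell_2$-norm is a standing assumption of the paper. *)

From mathcomp Require Import all_boot all_order all_algebra.
Set Implicit Arguments. Unset Strict Implicit. Unset Printing Implicit Defensive.
Import Order.TTheory GRing.Theory Num.Theory.
Local Open Scope ring_scope.

Section Defs.
Variable R : rcfType.

Definition norm1 {m : nat} (v : 'cV[R]_m) : R := \sum_(i < m) `|v i 0|.
Definition sqnorm2 {m : nat} (v : 'cV[R]_m) : R := \sum_(i < m) (v i 0) ^+ 2.
Definition norm2 {m : nat} (v : 'cV[R]_m) : R := Num.sqrt (sqnorm2 v).
Definition norminf {m : nat} (v : 'cV[R]_m) : R :=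
  \big[Num.max/0]_(i < m) `|v i 0|.

Variables (n p : nat).

Definition lasso_obj (X : 'M[R]_(n, p)) (Y : 'cV[R]_n) (lam : R) (b : 'cV[R]_p) : R :=
  2^-1 * sqnorm2 (Y - X *m b) + lam * norm1 b.

Definition is_lasso_sol X Y lam (b : 'cV[R]_p) : Prop :=
  forall b' : 'cV[R]_p, lasso_obj X Y lam b <= lasso_obj X Y lam b'.

Definition dantzig_feasible (X : 'M[R]_(n, p)) (Y : 'cV[R]_n) (lam : R) (b : 'cV[R]_p) : Prop :=
  norminf (X^T *m (Y - X *m b)) <= lam.

Definition is_dantzig_sol X Y lam (b : 'cV[R]_p) : Prop :=
  dantzig_feasible X Y lam b /\
  forall b' : 'cV[R]_p, dantzig_feasible X Y lam b' -> norm1 b <= norm1 b'.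

End Defs.

From mathcomp Require Import all_boot all_order all_algebra.
From mathcomp Require Import ring lra.
Set Implicit Arguments. Unset Strict Implicit. Unset Printing Implicit Defensive.
Import Order.TTheory GRing.Theory Num.Theory.
Local Open Scope ring_scope.

(* Both problems are characterised by the same KKT conditions on the
   correlations r = X^T (Y - X b): |r_j| <= lam everywhere, and r_j b_j = lam |b_j|.
   For the Lasso these are the subgradient conditions; necessity follows from
   perturbing one coordinate at a time, where unit columns make the quadratic
   term t^2/2.  For the Dantzig selector, diagonal dominance of M = (X^T X)^-1
   does two things.  Moving b along a column of M shifts a single correlation and
   strictly decreases |b|_1, so a Dantzig solution saturates the constraint with
   the sign of b_j.  Conversely, it yields a dual certificate w with w = sgn b on
   the support, |w| <= 1, and w M vanishing off the support and of the sign of b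
   on it; then |b|_1 = <w, b> <= <w, b'> <= |b'|_1 for every feasible b'. *)

Section Prox.
Variables (R : realFieldType) (lam : R).
Hypothesis lam_gt0 : 0 < lam.

Lemma prox_oppr (r b : R) :
  (forall t, t * r <= 2^-1 * t ^+ 2 + lam * (`|b + t| - `|b|)) ->
  forall t, t * - r <= 2^-1 * t ^+ 2 + lam * (`|- b + t| - `|- b|).
Proof.
move=> hmin t; rewrite mulrN normrN -[`|- b + t|]normrN opprD opprK.
by have := hmin (- t); rewrite mulNr sqrrN.
Qed.

Lemma prox_norm_le (r b : R) :
  (forall t, t * r <= 2^-1 * t ^+ 2 + lam * (`|b + t| - `|b|)) -> `|r| <= lam.
Proof.
wlog r_ge0 : r b / 0 <= r => [wlog_pos hmin|hmin].
  have [/wlog_pos|r_lt0] := leP 0 r; first exact.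
  by rewrite -normrN (wlog_pos _ (- b)) ?oppr_ge0 ?ltW //; apply: prox_oppr.
rewrite ger0_norm // leNgt; apply/negP => lam_lt_r.
have t_gt0 : 0 < r - lam by rewrite subr_gt0.
have : lam * (`|b + (r - lam)| - `|b|) <= lam * (r - lam).
  by rewrite ler_pM2l //; have := ler_normD b (r - lam); rewrite (gtr0_norm t_gt0); lra.
have := hmin (r - lam); nra.
Qed.

Lemma prox_pos_ge (r b : R) : 0 < b ->
  (forall t, t * r <= 2^-1 * t ^+ 2 + lam * (`|b + t| - `|b|)) -> lam <= r.
Proof.
move=> b_gt0 hmin; rewrite leNgt; apply/negP => r_lt_lam.
pose s := Num.min b (lam - r).
have s_gt0 : 0 < s by rewrite lt_min b_gt0 subr_gt0.
have [s_le_b s_le] : s <= b /\ s <= lam - r by split; rewrite ge_min lexx ?orbT.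
have := hmin (- s); rewrite !ger0_norm ?subr_ge0 ?addrN ?(ltW b_gt0) //.
by rewrite sqrrN; nra.
Qed.

Lemma prox_subgrad (r b : R) :
  (forall t, t * r <= 2^-1 * t ^+ 2 + lam * (`|b + t| - `|b|)) ->
  `|r| <= lam /\ r * b = lam * `|b|.
Proof.
move=> hmin; have r_le := prox_norm_le hmin; split => //.
move: r_le; rewrite ler_norml => /andP[Nlam_le_r r_le_lam].
have [b_gt0|b_lt0|<-] := ltrgtP 0 b; last by rewrite mulr0 normr0 mulr0.
  have -> : r = lam by apply/le_anti; rewrite r_le_lam (prox_pos_ge b_gt0 hmin).
  by rewrite gtr0_norm.
have lam_le_Nr : lam <= - r.
  by apply: (@prox_pos_ge _ (- b)); [rewrite oppr_gt0 | exact: prox_oppr].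
have -> : r = - lam by lra.
by rewrite ltr0_norm // mulrN mulNr.
Qed.

End Prox.

Lemma sum_mul_mulmx (R : comPzRingType) m k (A : 'M[R]_(m, k))
    (e : 'cV[R]_m) (d : 'cV[R]_k) :
  \sum_i e i 0 * (A *m d) i 0 = \sum_j (A^T *m e) j 0 * d j 0.
Proof.
under eq_bigr do rewrite mxE big_distrr.
rewrite exchange_big; apply: eq_bigr => j _; rewrite mxE big_distrl.
by apply: eq_bigr => i _ /=; rewrite mxE mulrCA mulrA.
Qed.

Section Norms.
Variable R : rcfType.

Lemma sqnorm2_ge0 m (v : 'cV[R]_m) : 0 <= sqnorm2 v.
Proof. by apply: sumr_ge0 => i _; apply: sqr_ge0. Qed.

Lemma norminf_leP m (v : 'cV[R]_m) a : 0 <= a ->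
  reflect (forall i, `|v i 0| <= a) (norminf v <= a).
Proof.
move=> a_ge0; apply: (iffP idP) => [v_le i|v_le].
  exact: le_trans (le_bigmax 0 (fun i => `|v i 0|) i) v_le.
by apply: bigmax_le => // i _; apply: v_le.
Qed.

Lemma norm1_add_delta p (b : 'cV[R]_p) t j :
  norm1 (b + t *: delta_mx j 0) - norm1 b = `|b j 0 + t| - `|b j 0|.
Proof.
rewrite /norm1 (bigD1 j) //= [X in _ - X](bigD1 j) //= !mxE !eqxx mulr1.
rewrite (eq_bigr (fun i => `|b i 0|)) => [|i /negbTE ij]; last first.
  by rewrite !mxE ij mulr0 addr0.
by rewrite opprD addrACA subrr addr0.
Qed.

Lemma sqnorm2_mul_delta n p (X : 'M[R]_(n, p)) t j :
  sqnorm2 (X *m (t *: delta_mx j 0)) = t ^+ 2 * sqnorm2 (col j X).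
Proof.
rewrite -scalemxAr -colE /sqnorm2 mulr_sumr.
by apply: eq_bigr => i _; rewrite mxE exprMn.
Qed.

End Norms.

Section Lasso.
Variables (R : rcfType) (n p : nat) (X : 'M[R]_(n, p)) (Y : 'cV[R]_n) (lam : R).

Definition corr (b : 'cV[R]_p) := X^T *m (Y - X *m b).

Definition kkt (b : 'cV[R]_p) :=
  forall j, `|corr b j 0| <= lam /\ corr b j 0 * b j 0 = lam * `|b j 0|.

Lemma lasso_obj_addE b d :
  lasso_obj X Y lam (b + d) - lasso_obj X Y lam b =
  - \sum_j corr b j 0 * d j 0 + 2^-1 * sqnorm2 (X *m d)
  + lam * (norm1 (b + d) - norm1 b).
Proof.
rewrite /lasso_obj /sqnorm2 mulmxDr opprD addrA -sum_mul_mulmx.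
set e := Y - X *m b.
have -> : \sum_i (e - X *m d) i 0 ^+ 2 =
    \sum_i e i 0 ^+ 2 - 2 * \sum_i e i 0 * (X *m d) i 0 + \sum_i (X *m d) i 0 ^+ 2.
  rewrite mulr_sumr -sumrB -big_split /=; apply: eq_bigr => i _.
  by rewrite !mxE; ring.
by field.
Qed.

Lemma kkt_lasso_sol b : kkt b -> is_lasso_sol X Y lam b.
Proof.
move=> b_kkt b'; rewrite -subr_ge0.
have := lasso_obj_addE b (b' - b); rewrite [b + _]addrC subrK => ->.
have corr_dot_b : \sum_j corr b j 0 * (b' - b) j 0 =
    \sum_j corr b j 0 * b' j 0 - lam * norm1 b.
  rewrite /norm1 mulr_sumr -sumrB; apply: eq_bigr => j _.
  by rewrite [(b' - b) j 0]mxE [(- b) j 0]mxE mulrDr mulrN (b_kkt j).2.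
have corr_dot_b' : \sum_j corr b j 0 * b' j 0 <= lam * norm1 b'.
  rewrite /norm1 mulr_sumr; apply: ler_sum => j _.
  by apply: le_trans (ler_norm _) _; rewrite normrM ler_wpM2r // (b_kkt j).1.
have := sqnorm2_ge0 (X *m (b' - b)); lra.
Qed.

Hypothesis lam_gt0 : 0 < lam.

Lemma lasso_sol_kkt b : (forall j, sqnorm2 (col j X) = 1) ->
  is_lasso_sol X Y lam b -> kkt b.
Proof.
move=> unit_cols b_opt j; apply: prox_subgrad => // t.
have := b_opt (b + t *: delta_mx j 0); rewrite -subr_ge0 lasso_obj_addE.
rewrite sqnorm2_mul_delta unit_cols mulr1 norm1_add_delta.
rewrite (bigD1 j) //= big1 => [|k /negbTE kj]; last by rewrite !mxE kj mulr0 mulr0.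
by rewrite !mxE eqxx mulr1 addr0 mulrC; lra.
Qed.

End Lasso.

Definition col_diag_dominant (R : numDomainType) p (M : 'M[R]_p) :=
  forall k : 'I_p, \sum_(i < p | i != k) `|M i k| < M k k.

Section DiagDominant.
Variables (R : realFieldType) (p : nat) (M : 'M[R]_p).
Hypothesis M_dom : col_diag_dominant M.

Lemma dominant_diag_gt0 k : 0 < M k k.
Proof. by apply: le_lt_trans (M_dom k); apply: sumr_ge0 => i _. Qed.

Lemma row_mulmx_bigD1 (u : 'rV[R]_p) k :
  (u *m M) 0 k = u 0 k * M k k + \sum_(i < p | i != k) u 0 i * M i k.
Proof. by rewrite mxE (bigD1 k). Qed.

Lemma dominant_row_bound (S : pred 'I_p) (u : 'rV[R]_p) a : 0 <= a ->
  (forall k, S k -> `|u 0 k| <= a) -> (forall k, ~~ S k -> (u *m M) 0 k = 0) ->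
  forall i, `|u 0 i| <= a.
Proof.
move=> a_ge0 u_S uM_0 i.
have [k _ k_max] := @arg_maxP _ _ _ i predT (fun k => `|u 0 k|) isT.
apply: le_trans (k_max i isT) _; have [/u_S //|k_notS] := boolP (S k).
have uk_eq : u 0 k * M k k = - \sum_(i < p | i != k) u 0 i * M i k.
  by apply/eqP; rewrite -addr_eq0 -row_mulmx_bigD1 uM_0.
have : `|u 0 k| * M k k <= `|u 0 k| * \sum_(i < p | i != k) `|M i k|.
  rewrite -[M k k]gtr0_norm ?dominant_diag_gt0 // -normrM uk_eq normrN mulr_sumr.
  apply: le_trans (ler_norm_sum _ _ _) _; apply: ler_sum => j _.
  by rewrite normrM; apply: ler_wpM2r => //; apply: k_max.
have := M_dom k; have := normr_ge0 (u 0 k); nra.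
Qed.

(* Invertible by [dominant_row_bound]; solving [w *m pinned_mx S = c] builds
   the dual certificate. *)
Definition pinned_mx (S : pred 'I_p) : 'M[R]_p :=
  \matrix_(i, k) if S k then (i == k)%:R else M i k.

Lemma mul_pinned_mx S (u : 'rV[R]_p) k :
  (u *m pinned_mx S) 0 k = if S k then u 0 k else (u *m M) 0 k.
Proof.
rewrite !mxE; under eq_bigr do rewrite mxE; case: (S k) => //.
rewrite (bigD1 k) //= big1 => [|i /negbTE ik]; last by rewrite ik mulr0.
by rewrite eqxx mulr1 addr0.
Qed.

Lemma pinned_mx_unit S : pinned_mx S \in unitmx.
Proof.
rewrite unitmxE unitfE; apply/det0P => -[u u_neq0 uP0]; case/eqP: u_neq0.
have u_le0 : forall i, `|u 0 i| <= 0.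
  apply: (@dominant_row_bound S) => // k Sk; have := mul_pinned_mx S u k.
    by rewrite uP0 mxE Sk => <-; rewrite normr0.
  by rewrite uP0 mxE (negbTE Sk).
by apply/rowP => i; rewrite mxE; apply/eqP; rewrite -normr_le0.
Qed.

Lemma pinned_solution_exists S (c : 'rV[R]_p) :
  exists w : 'rV[R]_p, forall k, c 0 k = if S k then w 0 k else (w *m M) 0 k.
Proof.
exists (c *m invmx (pinned_mx S)) => k.
by rewrite -mul_pinned_mx mulmxKV ?pinned_mx_unit.
Qed.

Lemma dominant_sign_gt0 (w : 'rV[R]_p) k :
  (forall i, `|w 0 i| <= 1) -> `|w 0 k| = 1 -> 0 < w 0 k * (w *m M) 0 k.
Proof.
move=> w_le1 wk1; rewrite row_mulmx_bigD1 mulrDr mulrA -expr2 -real_normK ?num_real //.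
rewrite wk1 expr1n mul1r mulr_sumr.
have : - \sum_(i < p | i != k) `|M i k| <= \sum_(i < p | i != k) w 0 k * (w 0 i * M i k).
  rewrite -sumrN; apply: ler_sum => i _; rewrite lerNl; apply: le_trans (ler_norm _) _.
  by rewrite normrN !normrM wk1 mul1r ler_piMl.
have := M_dom k; lra.
Qed.

End DiagDominant.

Lemma norm1_sub_dominant_col (R : rcfType) p (M : 'M[R]_p) (b : 'cV[R]_p) j t :
  col_diag_dominant M -> 0 < t -> t * M j j <= `|b j 0| ->
  norm1 (b - (t * Num.sg (b j 0)) *: col j M) < norm1 b.
Proof.
move=> M_dom t_gt0 t_le.
have bj_neq0 : b j 0 != 0.
  by rewrite -normr_gt0; apply: lt_le_trans t_le; rewrite mulr_gt0 ?dominant_diag_gt0.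
set s := Num.sg (b j 0).
have entry k : (b - (t * s) *: col j M) k 0 = b k 0 - t * s * M k j by rewrite !mxE.
rewrite /norm1 (bigD1 j) //= [X in _ < X](bigD1 j) //= entry.
under eq_bigr do rewrite entry.
have jth : `|b j 0 - t * s * M j j| = `|b j 0| - t * M j j.
  have -> : b j 0 - t * s * M j j = s * (`|b j 0| - t * M j j).
    by rewrite {1}[b j 0]numEsg -/s; ring.
  by rewrite normrM normr_sg bj_neq0 mul1r ger0_norm ?subr_ge0.
have others : \sum_(k < p | k != j) `|b k 0 - t * s * M k j| <=
    \sum_(k < p | k != j) `|b k 0| + t * \sum_(k < p | k != j) `|M k j|.
  rewrite mulr_sumr -big_split; apply: ler_sum => k _.
  apply: le_trans (ler_normB _ _) _.
  by rewrite !normrM normr_sg bj_neq0 mulr1 gtr0_norm.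
have : 0 < t * (M j j - \sum_(k < p | k != j) `|M k j|).
  by rewrite mulr_gt0 // subr_gt0; apply: M_dom.
rewrite mulrBr; lra.
Qed.

Section Dantzig.
Variables (R : rcfType) (n p : nat) (X : 'M[R]_(n, p)) (Y : 'cV[R]_n) (lam : R).
Hypotheses (lam_gt0 : 0 < lam) (XtX_unit : X^T *m X \in unitmx).
Hypothesis M_dom : col_diag_dominant (invmx (X^T *m X)).
Local Notation G := (X^T *m X).
Local Notation M := (invmx (X^T *m X)).

Lemma corr_sub b c : corr X Y (b - c) = corr X Y b + G *m c.
Proof. by rewrite /corr !mulmxBr !mulmxA opprB addrA addrAC. Qed.

Lemma dantzig_sol_kkt b : is_dantzig_sol X Y lam b -> kkt X Y lam b.
Proof.
move=> [b_feas b_opt] j.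
have corr_le : forall k, `|corr X Y b k 0| <= lam by apply/norminf_leP => //; exact: ltW.
split=> //; set r := corr X Y b in corr_le *.
have [->|bj_neq0] := eqVneq (b j 0) 0; first by rewrite mulr0 normr0 mulr0.
set s := Num.sg (b j 0).
have s_sq : s * s = 1 by rewrite -expr2 sqr_sg bj_neq0.
have sr_le : `|s * r j 0| <= lam by rewrite normrM normr_sg bj_neq0 mul1r.
suff sr_eq : s * r j 0 = lam.
  by rewrite {1}[b j 0]numEsg -/s mulrA [r j 0 * s]mulrC sr_eq.
apply/le_anti; rewrite (le_trans (ler_norm _) sr_le) /= leNgt; apply/negP => sr_lt.
have Mjj_gt0 := dominant_diag_gt0 M_dom j.
pose t := Num.min (lam - s * r j 0) (`|b j 0| / M j j).
have t_gt0 : 0 < t by rewrite lt_min subr_gt0 sr_lt divr_gt0 ?normr_gt0.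
have t_le_gap : t <= lam - s * r j 0 by rewrite ge_min lexx.
have tM_le : t * M j j <= `|b j 0| by rewrite -ler_pdivlMr // ge_min lexx orbT.
suff feas : dantzig_feasible X Y lam (b - (t * s) *: col j M).
  by have := b_opt _ feas; rewrite leNgt norm1_sub_dominant_col.
apply/norminf_leP => [|k]; first exact: ltW.
rewrite -/(corr X Y _) corr_sub -scalemxAr colE mulmxA mulmxV // mul1mx.
rewrite [(corr X Y b + _) k 0]mxE [(_ *: delta_mx j 0) k 0]mxE.
rewrite [delta_mx j 0 k 0]mxE -/r.
have [->|kj] := eqVneq k j; last by rewrite mulr0 addr0 corr_le.
have -> : r j 0 + t * s * 1 = s * (s * r j 0 + t).
  by rewrite mulr1 mulrDr mulrA s_sq mul1r mulrC.
rewrite normrM normr_sg bj_neq0 mul1r ler_norml.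
by move: sr_le; rewrite ler_norml => /andP[? ?]; apply/andP; split; lra.
Qed.

Lemma kkt_dantzig_sol b : kkt X Y lam b -> is_dantzig_sol X Y lam b.
Proof.
move=> b_kkt; split => [|b' b'_feas].
  by apply/norminf_leP => [|k]; [exact: ltW | exact: (b_kkt k).1].
have corr'_le : forall k, `|corr X Y b' k 0| <= lam.
  by apply/norminf_leP => //; exact: ltW.
set r := corr X Y b in b_kkt *; set r' := corr X Y b' in corr'_le *.
pose S k := b k 0 != 0.
have r_sg k : S k -> r k 0 = lam * Num.sg (b k 0).
  by move=> Sk; apply: (mulIf Sk); rewrite (b_kkt k).2 normrEsg mulrA.
have [w w_pin] := pinned_solution_exists M_dom S (\row_k Num.sg (b k 0)).
have w_S k : S k -> w 0 k = Num.sg (b k 0).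
  by move=> Sk; have := w_pin k; rewrite mxE Sk.
have wM_0 k : ~~ S k -> (w *m M) 0 k = 0.
  by rewrite negbK => /eqP bk0; have := w_pin k; rewrite mxE /S bk0 eqxx sgr0.
have w_le1 : forall i, `|w 0 i| <= 1.
  apply: (dominant_row_bound M_dom (S := S)) => // k Sk.
  by rewrite w_S // normr_sg (Sk : b k 0 != 0).
have vG : w *m M *m G = w by rewrite mulmxKV.
have G_diff : G *m (b - b') = r' - r.
  by have := corr_sub b (b - b'); rewrite subKr -/r' -/r => ->; rewrite [RHS]addrC addKr.
have dot_le : (w *m (b - b')) 0 0 <= 0.
  rewrite -vG -mulmxA G_diff mxE; apply: sumr_le0 => k _.
  have [Sk|/wM_0 -> //] := boolP (S k); last by rewrite mul0r.
  have v_sign : 0 < Num.sg (b k 0) * (w *m M) 0 k.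
    rewrite -w_S //; apply: dominant_sign_gt0 => //.
    by rewrite w_S // normr_sg (Sk : b k 0 != 0).
  have v_norm : `|(w *m M) 0 k| = Num.sg (b k 0) * (w *m M) 0 k.
    by rewrite -(gtr0_norm v_sign) normrM normr_sg (Sk : b k 0 != 0) mul1r.
  have : (w *m M) 0 k * r' k 0 <= `|(w *m M) 0 k| * lam.
    by apply: le_trans (ler_norm _) _; rewrite normrM ler_wpM2l.
  by rewrite [(r' - r) k 0]mxE [(- r) k 0]mxE r_sg // v_norm; nra.
have dot_b : (w *m b) 0 0 = norm1 b.
  rewrite mxE; apply: eq_bigr => k _; have [Sk|] := boolP (S k).
    by rewrite w_S // normrEsg.
  by rewrite negbK => /eqP ->; rewrite mulr0 normr0.
have dot_b' : (w *m b') 0 0 <= norm1 b'.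
  rewrite mxE; apply: ler_sum => k _; apply: le_trans (ler_norm _) _.
  by rewrite normrM ler_piMl.
by move: dot_le; rewrite mulmxBr [(w *m b - _) 0 0]mxE [(- (w *m b')) 0 0]mxE; lra.
Qed.

End Dantzig.

Theorem theorem1 (R : rcfType) (n p : nat) (X : 'M[R]_(n, p)) (Y : 'cV[R]_n) :
  (p <= n)%N ->
  (forall j : 'I_p, norm2 (col j X) = 1) ->
  X^T *m X \in unitmx ->
  (let M := invmx (X^T *m X) in
   forall j : 'I_p, \sum_(i < p | i != j) `|M i j| < M j j) ->
  forall lam : R, 0 < lam ->
  forall b : 'cV[R]_p,
    is_lasso_sol X Y lam b <-> is_dantzig_sol X Y lam b.
Proof.
move=> _ unit_norm2 XtX_unit M_dom lam lam_gt0 b.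
have unit_cols j : sqnorm2 (col j X) = 1.
  by rewrite -[LHS]sqr_sqrtr ?sqnorm2_ge0 // -/(norm2 _) unit_norm2 expr1n.
split=> [/(lasso_sol_kkt lam_gt0 unit_cols)|/(dantzig_sol_kkt lam_gt0 XtX_unit M_dom)].
  exact: (kkt_dantzig_sol lam_gt0 XtX_unit M_dom).
exact: kkt_lasso_sol.
Qed.
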